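(* Let $\mathbf{A}\in\mathsf{K}$ be such that the lowest fibre $\mathbf{A}_0$ of the Płonka sum representation of its $\{\wedge,\vee,\neg,0,1\}$-reduct is a two-element Boolean algebra. If the fibres $\mathbf{A}_i$ and $\mathbf{A}_j$ are non-trivial, then the fibre $\mathbf{A}_{i\vee j}$ is non-trivial.
   Context: $\mathsf{K}$ is the variety of type $\langle\wedge,\vee,\neg,J_2,0,1\rangle$ axiomatised by: - $x\vee x\approx x$; - $x\vee y\approx y\vee x$; - $x\vee(y\vee z)\approx(x\vee y)\vee z$; - $\neg\neg x\approx x$; - $x\wedge y\approx\neg(\neg x\vee\neg y)$; - $x\wedge(\neg x\vee y)\approx x\wedge y$; - $0\vee x\approx x$; - $1\approx\neg0$; - $J_2x\vee\neg J_2x\approx1$; - $x\vee J_2y\approx x\vee J_2(x\vee y)$; - $x\wedge J_2x\approx x$; - $J_2(x\wedge\neg x)\approx0$. The $\{\wedge,\vee,\neg,0,1\}$-reduct of any member of $\mathsf{K}$ is an involutive bisemilattice. Hence it is canonically a Płonka sum of Boolean algebras $\mathbf{A}_i$ (fibres) over a join-semilattice $\langle I,\vee,0\rangle$ with least element $0$, with homomorphisms $p_{ij}$ for $i\le j$. Operations are computed in the fibre indexed by the join of the arguments' indices, after mapping them there via the $p_{ij}$. Two elements $a,b$ lie in the same fibre iff $a\wedge(a\vee b)=a$ and $b\wedge(b\vee a)=b$. A fibre is trivial if it has one element. *)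

Record KSig := {
  carrier :> Type;
  kmeet : carrier -> carrier -> carrier;
  kjoin : carrier -> carrier -> carrier;
  kneg : carrier -> carrier;
  kJ2 : carrier -> carrier;
  kzero : carrier;
  kone : carrier
}.

Definition in_K (A : KSig) : Prop :=
  let m := kmeet A in let j := kjoin A in let n := kneg A in
  let J := kJ2 A in let z := kzero A in let o := kone A in
  (forall x, j x x = x) /\
  (forall x y, j x y = j y x) /\
  (forall x y w, j x (j y w) = j (j x y) w) /\
  (forall x, n (n x) = x) /\
  (forall x y, m x y = n (j (n x) (n y))) /\
  (forall x y, m x (j (n x) y) = m x y) /\
  (forall x, j z x = x) /\
  (o = n z) /\
  (forall x, j (J x) (n (J x)) = o) /\
  (forall x y, j x (J y) = j x (J (j x y))) /\
  (forall x, m x (J x) = x) /\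
  (forall x, J (m x (n x)) = z).

(** Two elements lie in the same Płonka fibre. *)
Definition same_fibre (A : KSig) (a b : A) : Prop :=
  kmeet A a (kjoin A a b) = a /\ kmeet A b (kjoin A b a) = b.

Definition fibre_nontrivial (A : KSig) (a : A) : Prop :=
  exists b : A, same_fibre A a b /\ b <> a.

Definition lowest_fibre_two (A : KSig) : Prop :=
  exists x y : A, x <> y /\
    (forall w : A, same_fibre A w (kzero A) <-> (w = x \/ w = y)).

From Stdlib Require Import Setoid.

(** Write [bot x = x ∧ ¬x] and [top x = x ∨ ¬x] for the bounds of the fibre of
    [x]; the fibre of [x] is trivial iff [¬x = x] iff [top x = bot x].  Since
    [J₂] takes its values in the lowest fibre [{0, 1}], [J₂ (top b) = 1] when the
    fibre of [b] is non-trivial (otherwise [top b = top b ∧ 0 = bot b]), and the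
    axiom [x ∨ J₂ y = x ∨ J₂ (x ∨ y)] with [x := bot a], [y := top b] then gives
    [J₂ (bot a ∨ top b) = 1] when the fibre of [a] is non-trivial.  But
    [bot a ∨ top b = top (a ∨ b)], whereas [J₂ (top c) = J₂ (c ∧ ¬c) = 0]
    whenever [¬c = c]. *)

Section VarietyK.

Variable A : KSig.
Hypothesis HK : in_K A.

Local Notation j := (kjoin A).
Local Notation m := (kmeet A).
Local Notation n := (kneg A).
Local Notation J := (kJ2 A).
Local Notation z := (kzero A).
Local Notation o := (kone A).

Lemma joinxx x : j x x = x. Proof. apply HK. Qed.
Lemma joinC x y : j x y = j y x. Proof. apply HK. Qed.
Lemma joinA x y w : j x (j y w) = j (j x y) w. Proof. apply HK. Qed.
Lemma negK x : n (n x) = x. Proof. apply HK. Qed.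
Lemma meetE x y : m x y = n (j (n x) (n y)). Proof. apply HK. Qed.
Lemma meet_join_neg x y : m x (j (n x) y) = m x y. Proof. apply HK. Qed.
Lemma join0x x : j z x = x. Proof. apply HK. Qed.
Lemma one_def : o = n z. Proof. apply HK. Qed.
Lemma join_J_join x y : j x (J y) = j x (J (j x y)). Proof. apply HK. Qed.
Lemma meet_J x : m x (J x) = x. Proof. apply HK. Qed.

Lemma neg_join x y : n (j x y) = m (n x) (n y).
Proof. now rewrite meetE, !negK. Qed.

Lemma neg_meet x y : n (m x y) = j (n x) (n y).
Proof. now rewrite meetE, negK. Qed.

Lemma neg_inj x y : n x = n y -> x = y.
Proof. intro e. now rewrite <- (negK x), e, negK. Qed.

Lemma meetxx x : m x x = x.
Proof. now rewrite meetE, joinxx, negK. Qed.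

Lemma meetC x y : m x y = m y x.
Proof. now rewrite !meetE, joinC. Qed.

Lemma meetA x y w : m x (m y w) = m (m x y) w.
Proof. now rewrite !meetE, !negK, joinA. Qed.

Lemma neg1 : n o = z.
Proof. now rewrite one_def, negK. Qed.

Lemma meet1x x : m o x = x.
Proof. now rewrite meetE, neg1, join0x, negK. Qed.

Lemma join_neg_meet x y : j x (m (n x) y) = j x y.
Proof.
  apply neg_inj. rewrite !neg_join, neg_meet, negK.
  pose proof (meet_join_neg (n x) (n y)) as e. now rewrite negK in e.
Qed.

Definition bot (x : A) : A := m x (n x).
Definition top (x : A) : A := j x (n x).

Lemma top_J x : top (J x) = o. Proof. unfold top; apply HK. Qed.
Lemma J_bot x : J (bot x) = z. Proof. unfold bot; apply HK. Qed.

Lemma meet0_bot x : m x z = bot x.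
Proof. now rewrite <- (meet_join_neg x z), joinC, join0x. Qed.

Lemma neg_bot x : n (bot x) = top x.
Proof. unfold bot, top. now rewrite neg_meet, negK, joinC. Qed.

Lemma neg_top x : n (top x) = bot x.
Proof. unfold bot, top. now rewrite neg_join, negK, meetC. Qed.

Lemma top_neg x : top (n x) = top x.
Proof. unfold top. now rewrite negK, joinC. Qed.

Lemma join1_top x : j x o = top x.
Proof.
  apply neg_inj. rewrite neg_join, neg1, neg_top, meet0_bot.
  unfold bot. now rewrite negK, meetC.
Qed.

Lemma meet_top x : m x (top x) = x.
Proof. unfold top. now rewrite joinC, meet_join_neg, meetxx. Qed.

Lemma bot_bot x : bot (bot x) = bot x.
Proof. now rewrite <- !meet0_bot, <- meetA, meetxx. Qed.

Lemma top_bot x : top (bot x) = top x.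
Proof. now rewrite <- !neg_bot, bot_bot. Qed.

Lemma bot_top x : bot (top x) = bot x.
Proof.
  unfold bot at 1.
  now rewrite neg_top, <- (meet0_bot x), meetA, (meetC (top x) x), meet_top.
Qed.

Lemma top_eq_bot x : top x = bot x -> n x = x.
Proof.
  intro e.
  assert (ex : x = bot x).
  { transitivity (m x (top x)); [now rewrite meet_top|].
    rewrite e. unfold bot. now rewrite meetA, meetxx. }
  assert (enx : n x = bot x).
  { transitivity (m (n x) (top (n x))); [now rewrite meet_top|].
    rewrite top_neg, e. unfold bot.
    now rewrite meetA, (meetC (n x) x), <- meetA, meetxx. }
  congruence.
Qed.

Lemma join_bot_top x y : j (bot x) (top y) = top (j x y).
Proof.
  assert (ebot : m (bot y) (bot x) = m (bot y) x).
  { rewrite <- !meet0_bot.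
    now rewrite (meetC x z), meetA, <- (meetA y z z), meetxx. }
  rewrite joinC, <- (join_neg_meet (top y) (bot x)), neg_top, ebot, <- neg_top.
  now rewrite join_neg_meet, joinC, <- !join1_top, joinA.
Qed.

Lemma J_top_fixed c : n c = c -> J (top c) = z.
Proof.
  intro Hc. assert (e : top c = bot c) by (unfold top, bot; now rewrite Hc, joinxx, meetxx).
  rewrite e. apply J_bot.
Qed.

Lemma same_fibre_sym a b : same_fibre A a b -> same_fibre A b a.
Proof. intros [Hab Hba]. now split. Qed.

Lemma same_fibre_neg a : same_fibre A a (n a).
Proof.
  split; [exact (meet_top a)|].
  pose proof (meet_top (n a)) as e. unfold top in e. now rewrite negK in e.
Qed.

Lemma same_fibre_fixed a c : n a = a -> same_fibre A a c -> c = a.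
Proof.
  intros Ha [Hac Hca].
  assert (absorb : forall y, m a (j a y) = m a y)
    by (intro y; rewrite <- Ha at 2; apply meet_join_neg).
  assert (e1 : m a c = a) by now rewrite <- absorb.
  assert (e2 : j a (n c) = a) by (rewrite <- Ha at 1; now rewrite <- neg_meet, e1).
  assert (e3 : m a (n c) = a) by now rewrite <- absorb, e2, meetxx.
  assert (e4 : j a c = a)
    by (rewrite <- Ha at 1; rewrite <- (negK c) at 1; now rewrite <- neg_meet, e3).
  now rewrite <- Hca, (joinC c a), e4, meetC.
Qed.

Lemma fibre_nontrivialP a : fibre_nontrivial A a <-> n a <> a.
Proof.
  split.
  - intros [c [Hac Hca]] Ha. exact (Hca (same_fibre_fixed a c Ha Hac)).
  - intro Ha. exists (n a). split; [apply same_fibre_neg | exact Ha].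
Qed.

Lemma J_fibre0 x : same_fibre A (J x) z.
Proof.
  split; [now rewrite joinC, join0x, meetxx|].
  assert (ez : z = bot (J x)) by now rewrite <- neg1, <- (top_J x), neg_top.
  rewrite join0x, ez. unfold bot. now rewrite meetC, meetA, meetxx.
Qed.

Section LowestFibreTwo.

Hypothesis H0 : lowest_fibre_two A.

Lemma one_neq_zero : o <> z.
Proof.
  destruct H0 as [x [y [xy Hf]]]. intro E.
  assert (Hz : n z = z) by now rewrite <- one_def.
  assert (fixed : forall w, w = x \/ w = y -> w = z)
    by (intros w Hw; apply (same_fibre_fixed z w Hz), same_fibre_sym, Hf, Hw).
  apply xy. now rewrite (fixed x), (fixed y) by auto.
Qed.

Lemma fibre0_elems w : same_fibre A w z -> w = z \/ w = o.
Proof.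
  pose proof one_neq_zero as oz.
  destruct H0 as [x [y [xy Hf]]]. intro Hw.
  assert (Hz : z = x \/ z = y) by (apply Hf; split; now rewrite joinxx, meetxx).
  assert (Ho : o = x \/ o = y).
  { apply Hf; split.
    - now rewrite joinC, join0x, meetxx.
    - now rewrite join0x, meetC, meet1x. }
  destruct (proj1 (Hf w) Hw), Hz, Ho;
    first [left; congruence | right; congruence | exfalso; congruence].
Qed.

Lemma J_values x : J x = z \/ J x = o.
Proof. exact (fibre0_elems _ (J_fibre0 x)). Qed.

Lemma J_top x : n x <> x -> J (top x) = o.
Proof.
  intro Hx. destruct (J_values (top x)) as [e|e]; [|exact e].
  exfalso. apply Hx, top_eq_bot.
  now rewrite <- (meet_J (top x)), e, meet0_bot, bot_top.
Qed.

Lemma J_bot_join x y : n x <> x -> J (top y) = o -> J (j (bot x) (top y)) = o.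
Proof.
  intros Hx Hy. destruct (J_values (j (bot x) (top y))) as [e|e]; [|exact e].
  exfalso. apply Hx, top_eq_bot.
  pose proof (join_J_join (bot x) (top y)) as E.
  now rewrite Hy, e, join1_top, top_bot, joinC, join0x in E.
Qed.

End LowestFibreTwo.

End VarietyK.

Theorem lemma4p4 (A : KSig) (HK : in_K A) (H0 : lowest_fibre_two A)
  (a b : A) (Ha : fibre_nontrivial A a) (Hb : fibre_nontrivial A b) :
  fibre_nontrivial A (kjoin A a b).
Proof.
  rewrite (fibre_nontrivialP A HK) in Ha, Hb |- *.
  intro Hc. apply (one_neq_zero A HK H0).
  rewrite <- (J_top_fixed A HK _ Hc), <- (join_bot_top A HK).
  symmetry. apply (J_bot_join A HK H0); [exact Ha|].
  exact (J_top A HK H0 b Hb).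
Qed.
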